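(* Let a classification model have feature space $\Phi=[-a,a]^n$ ($a>0$) and $n$ classes, with logits $z=Wx+b$ for $x\in\Phi$, $W\in\mathbb{R}^{n\times n}$, $b\in\mathbb{R}^n$, and $\rho(W)=\min_{i\ne j}\|W[j]-W[i]\|_2>0$. Let $\tau\in(0,1)$ and $\delta=\frac{1}{\rho(W)}\log\big(\frac{\tau(1-n)}{\tau-1}\big)$. For $i\ne j$ let $$\Delta^{(i,j)\pm\delta}_\phi=\Big\{x\in\Phi:\ \frac{|(W[i]-W[j])x+b[i]-b[j]|}{\|W[i]-W[j]\|_2}\le\delta\Big\},\qquad \Gamma\Delta=\bigcup_{i=1}^{n-1}\bigcup_{j=i+1}^n\Delta^{(i,j)\pm\delta}_\phi.$$ Then the fraction of $\Phi$ classified with softmax score at least $\tau$ satisfies $$\mathcal{R}(\Phi(\ge\tau))\ \ge\ 1-\frac{1}{(2a)^n}\mathrm{vol}(\Gamma\Delta),$$ where $\Phi(\ge\tau)=\{x\in\Phi:\max\mathrm{softmax}(Wx+b)\ge\tau\}$, $\mathcal{R}(\Phi(\ge\tau))=\mathrm{vol}(\Phi(\ge\tau))/(2a)^n$, and $\mathrm{vol}$ is $n$-dimensional Lebesgue measure.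
   Context: $W[k]$ denotes the $k$-th row of $W$; $\mathrm{softmax}(z)[k]=e^{z[k]}/\sum_l e^{z[l]}$. *)

From HB Require Import structures.
From mathcomp Require Import all_boot all_order all_algebra.
From mathcomp Require Import all_classical all_reals all_analysis.
Set Implicit Arguments. Unset Strict Implicit. Unset Printing Implicit Defensive.
Import Order.TTheory GRing.Theory Num.Theory.
Local Open Scope classical_set_scope.
Local Open Scope ring_scope.

Section defs.
Variables (R : realType) (n : nat).

(* points of R^n are row vectors; W[k] is the k-th row of W *)
Definition logits (W : 'M[R]_n) (b : 'rV[R]_n) (x : 'rV[R]_n) (k : 'I_n) : R :=
  \sum_(l < n) W k l * x ord0 l + b ord0 k.

Definition softmax (z : 'I_n -> R) (k : 'I_n) : R :=
  expR (z k) / \sum_(l < n) expR (z l).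

(* max_k softmax(z)[k]  (all entries are > 0, so 0 is a neutral start) *)
Definition max_softmax (z : 'I_n -> R) : R :=
  \big[Num.max/0]_(k < n) softmax z k.

Definition rowdist (W : 'M[R]_n) (i j : 'I_n) : R :=
  Num.sqrt (\sum_(l < n) (W j l - W i l) ^+ 2).

Definition rho (W : 'M[R]_n) : R :=
  inf [set d | exists i j : 'I_n, i != j /\ d = rowdist W i j].

Definition cube (a : R) : set 'rV[R]_n :=
  [set x | forall l : 'I_n, - a <= x ord0 l <= a].

Definition box (lo hi : 'I_n -> R) : set 'rV[R]_n :=
  [set x | forall l : 'I_n, lo l <= x ord0 l <= hi l].
Definition box_vol (lo hi : 'I_n -> R) : R := \prod_(l < n) (hi l - lo l).

(* n-dimensional Lebesgue (outer) measure: infimum of total volumes of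
   countable covers by closed boxes. On Lebesgue measurable sets this is
   the n-dimensional Lebesgue measure. *)
Definition vol (A : set 'rV[R]_n) : \bar R :=
  ereal_inf [set s | exists lo hi : nat -> 'I_n -> R,
     (forall k l, lo k l <= hi k l) /\
     A `<=` \bigcup_k box (lo k) (hi k) /\
     s = (\sum_(0 <= k <oo) (box_vol (lo k) (hi k))%:E)%E].

Definition Phi_ge (W : 'M[R]_n) (b : 'rV[R]_n) (a tau : R) : set 'rV[R]_n :=
  [set x | cube a x /\ tau <= max_softmax (logits W b x)].

Definition Delta (W : 'M[R]_n) (b : 'rV[R]_n) (a delta : R) (i j : 'I_n)
  : set 'rV[R]_n :=
  [set x | cube a x /\
     `|\sum_(l < n) (W i l - W j l) * x ord0 l + (b ord0 i - b ord0 j)|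
       / rowdist W j i <= delta].

Definition GammaDelta (W : 'M[R]_n) (b : 'rV[R]_n) (a delta : R) : set 'rV[R]_n :=
  \bigcup_(i in [set i : 'I_n | true])
    \bigcup_(j in [set j : 'I_n | (i < j)%N]) Delta W b a delta i j.

End defs.

From HB Require Import structures.
From mathcomp Require Import all_boot all_order all_algebra.
From mathcomp Require Import all_classical all_reals all_analysis.
From mathcomp Require Import measurable_realfun lra.
Set Implicit Arguments.
Unset Strict Implicit.
Unset Printing Implicit Defensive.
Import Order.TTheory GRing.Theory Num.Theory.
Local Open Scope classical_set_scope.
Local Open Scope ring_scope.

(* Let k be a largest logit of z = Wx + b. Since |z_i - z_j| is
   ||W[i] - W[j]|| times the distance from x to the hyperplane z_i = z_j, a
   point x outside every slab Delta^(i,j) has z_k - z_l >= delta rho(W)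
   = ln (tau (n - 1) / (1 - tau)) for all l <> k; each of the n - 1 other
   exponentials is then below (1 - tau) / (tau (n - 1)) e^(z_k), which forces
   softmax(z)_k >= tau. Hence the cube is covered by Phi(>= tau) and
   GammaDelta, and the bound follows from subadditivity of the outer volume
   and vol(cube) >= (2a)^n. The latter says that countably many boxes
   covering a box have total volume at least its own; it is proved by
   induction on the dimension for weighted covers, integrating along the last
   coordinate. *)

(* Boxes with nat-indexed coordinates, so that the dimension can vary in an
   induction. *)
Section nat_boxes.
Variable R : realType.

Definition nbox n (lo hi : nat -> R) : set (nat -> R) :=
  [set p | forall l, (l < n)%N -> lo l <= p l <= hi l].

Definition nvol n (lo hi : nat -> R) : R := \prod_(l < n) (hi l - lo l).

Lemma nvol_ge0 n lo hi : (forall l, lo l <= hi l) -> 0 <= nvol n lo hi.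
Proof. by move=> le_lohi; apply: prodr_ge0 => l _; rewrite subr_ge0. Qed.

Lemma nvolS n lo hi : nvol n.+1 lo hi = nvol n lo hi * (hi n - lo n).
Proof. exact: big_ord_recr. Qed.

Lemma nboxS_with n lo hi (p : nat -> R) t :
  nbox n.+1 lo hi [eta p with n |-> t] <->
  `[lo n, hi n]%classic t /\ nbox n lo hi p.
Proof.
split=> [p_in | [t_in p_in] l].
  split; first by have := p_in n (ltnSn n); rewrite /= eqxx in_itv.
  by move=> l ltln; have := p_in l (ltnW ltln); rewrite /= ltn_eqF.
rewrite ltnS leq_eqVlt /= => /orP[/eqP ->|ltln].
  by move: t_in; rewrite /= eqxx in_itv.
by rewrite ltn_eqF //; apply: p_in.
Qed.

Lemma indic_nboxS n lo hi (p : nat -> R) t :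
  \1_(nbox n.+1 lo hi) [eta p with n |-> t] =
  \1_(`[lo n, hi n]) t * \1_(nbox n lo hi) p :> R.
Proof.
rewrite !indicE.
have [t_in|t_out] := pselect (`[lo n, hi n]%classic t); last first.
  by rewrite (memNset t_out) mul0r memNset // => /nboxS_with[].
have [p_in|p_out] := pselect (nbox n lo hi p).
  by rewrite !mem_set ?mulr1 //; apply/nboxS_with.
by rewrite (memNset p_out) mulr0 memNset // => /nboxS_with[].
Qed.

End nat_boxes.

Section interval_cover.
Variable R : realType.
Local Open Scope ereal_scope.

Lemma lebesgue_measure_itv_cc (a b : R) : (a <= b)%R ->
  lebesgue_measure (`[a, b]%classic : set R) = (b - a)%:E.
Proof.
rewrite lebesgue_measure_itv /= lte_fin le_eqVlt => /orP[/eqP->|->] //.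
by rewrite ltxx subrr.
Qed.

Lemma weighted_itv_cover_le (lo hi v : R) (w a b : nat -> R) :
  (lo <= hi)%R -> (0 <= v)%R -> (forall k, 0 <= w k)%R ->
  (forall k, a k <= b k)%R ->
  (forall t, (lo <= t <= hi)%R ->
     v%:E <= \sum_(k <oo) (w k * \1_(`[a k, b k]) t)%:E) ->
  (v * (hi - lo))%:E <= \sum_(k <oo) (w k * (b k - a k))%:E.
Proof.
move=> lohi v0 w0 ab cover.
pose D : set (measurableTypeR R) := `[lo, hi]%classic.
pose f k (t : measurableTypeR R) := (w k)%:E * (\1_(`[a k, b k]) t)%:E.
have mD : measurable D by exact: measurable_itv.
have f0 k t : 0 <= f k t by rewrite mule_ge0 ?lee_fin.
have mf k : measurable_fun D (f k).
  by apply: measurable_funeM; apply/measurable_EFinP; exact: measurable_indic.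
rewrite EFinM -lebesgue_measure_itv_cc // -integral_cst //.
apply: (@le_trans _ _ (\int[lebesgue_measure]_(t in D) \sum_(k <oo) f k t)).
  by apply: ge0_le_integral => //; exact: ge0_emeasurable_sum.
rewrite integral_nneseries //; apply: lee_nneseries => [k _ _|k _].
  exact: integral_ge0.
rewrite ge0_integralZl_EFin ?integral_indic //; last first.
  by apply/measurable_EFinP/measurable_indic.
rewrite EFinM -lebesgue_measure_itv_cc // lee_wpmul2l ?lee_fin //.
exact: measureIl.
Qed.

End interval_cover.

Section nbox_cover.
Variables (R : realType) (lo hi : nat -> R) (L H : nat -> nat -> R).
Hypotheses (le_lohi : forall l, lo l <= hi l)
  (le_LH : forall k l, L k l <= H k l).
Local Open Scope ereal_scope.

Lemma weighted_nbox_cover_le n (c : nat -> R) : (forall k, 0 <= c k)%R ->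
  (forall p, nbox n lo hi p ->
     1 <= \sum_(k <oo) (c k * \1_(nbox n (L k) (H k)) p)%:E) ->
  (nvol n lo hi)%:E <= \sum_(k <oo) (c k * nvol n (L k) (H k))%:E.
Proof.
elim: n c => [|n IH] c c0 cover.
  have nbox0 (L' H' : nat -> R) p : (\1_(nbox 0 L' H') p = 1 :> R)%R.
    by rewrite indicE mem_set.
  have /cover : nbox 0 lo hi (fun=> 0%R) by [].
  under eq_eseriesr do rewrite nbox0 mulr1.
  by rewrite /nvol big_ord0 => ?; under eq_eseriesr do rewrite big_ord0 mulr1.
(* Fixing the last coordinate at t, the boxes whose last side contains t form a
   weighted cover of the slice by n-dimensional boxes. *)
rewrite nvolS; under eq_eseriesr do rewrite nvolS mulrA.
apply: weighted_itv_cover_le => // [|k|t t_in]; first exact: nvol_ge0.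
  by rewrite mulr_ge0 ?nvol_ge0.
under eq_eseriesr do rewrite mulrAC.
apply: IH => [k|p p_in]; first by rewrite mulr_ge0 // indicE.
have := cover [eta p with n |-> t]; rewrite nboxS_with /= in_itv /=.
by under eq_eseriesr do rewrite indic_nboxS mulrA; apply.
Qed.

End nbox_cover.

Section row_boxes.
Variables (R : realType) (n : nat).
Implicit Types (lo hi : 'I_n -> R).

Definition ord_ext (f : 'I_n -> R) : nat -> R :=
  fun l => if insub l is Some i then f i else 0.

Lemma ord_extE (f : 'I_n -> R) (i : 'I_n) : ord_ext f i = f i.
Proof. by rewrite /ord_ext valK. Qed.

Lemma ord_ext_le (f g : 'I_n -> R) : (forall i, f i <= g i) ->
  forall l, ord_ext f l <= ord_ext g l.
Proof. by move=> le_fg l; rewrite /ord_ext; case: insub. Qed.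

Lemma box_vol_ge0 lo hi : (forall l, lo l <= hi l) -> 0 <= box_vol lo hi.
Proof. by move=> le_lohi; apply: prodr_ge0 => l _; rewrite subr_ge0. Qed.

Lemma nvol_ord_ext lo hi : nvol n (ord_ext lo) (ord_ext hi) = box_vol lo hi.
Proof. by apply: eq_bigr => i _; rewrite !ord_extE. Qed.

Lemma nbox_ord_ext lo hi (p : nat -> R) :
  nbox n (ord_ext lo) (ord_ext hi) p <-> box lo hi (\row_(l < n) p l).
Proof.
split=> p_in l; first by rewrite mxE -!ord_extE; exact: p_in.
by move=> ltln; have := p_in (Ordinal ltln); rewrite mxE -!ord_extE.
Qed.

Local Open Scope ereal_scope.

Lemma box_vol_le_cover lo hi (L H : nat -> 'I_n -> R) :
  (forall l, lo l <= hi l)%R -> (forall k l, L k l <= H k l)%R ->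
  box lo hi `<=` \bigcup_k box (L k) (H k) ->
  (box_vol lo hi)%:E <= \sum_(k <oo) (box_vol (L k) (H k))%:E.
Proof.
move=> le_lohi le_LH cover; rewrite -nvol_ord_ext.
under eq_eseriesr do rewrite -nvol_ord_ext -[nvol _ _ _]mul1r.
apply: weighted_nbox_cover_le => [l|k l|k|p /nbox_ord_ext/cover[k _]].
- exact: ord_ext_le.
- exact: ord_ext_le.
- exact: ler01.
move=> /nbox_ord_ext p_in.
rewrite (@nneseriesD1 _ _ k) // indicE mem_set // mulr1 leeDl //.
by apply: nneseries_ge0 => i _ _; rewrite lee_fin mul1r indicE.
Qed.

End row_boxes.

Section interleave.
Variable T : Type.

Definition interleave (f g : nat -> T) k := if odd k then g k./2 else f k./2.

Lemma interleave_double f g k : interleave f g k.*2 = f k.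
Proof. by rewrite /interleave odd_double doubleK. Qed.

Lemma interleave_doubleS f g k : interleave f g k.*2.+1 = g k.
Proof. by rewrite /interleave /= odd_double uphalf_double. Qed.

End interleave.

Lemma nneseries_interleave (R : realType) (u v : nat -> \bar R) :
  (forall k, 0 <= u k)%E -> (forall k, 0 <= v k)%E ->
  (\sum_(k <oo) interleave u v k = \sum_(k <oo) u k + \sum_(k <oo) v k)%E.
Proof.
move=> u0 v0; have w0 k : (0 <= interleave u v k)%E.
  by rewrite /interleave; case: ifP.
rewrite !nneseries_esumT // (esumID [set k | odd k]) // addeC.
have -> : [set: nat] `&` ~` [set k | odd k] = double @` setT.
  rewrite setTI; apply/seteqP; split=> [k /negP k_even|_ [k _ <-]] /=.
    by exists k./2 => //; rewrite even_halfK.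
  by rewrite odd_double.
have -> : [set: nat] `&` [set k | odd k] = (fun k => k.*2.+1) @` setT.
  rewrite setTI; apply/seteqP; split=> [k /= k_odd|_ [k _ <-]] /=.
    by exists k./2 => //; rewrite odd_halfK // prednK // odd_gt0.
  by rewrite odd_double.
rewrite !esum_image; last 2 first.
- by move=> i j _ _ /succn_inj/double_inj.
- by move=> i j _ _ /double_inj.
under eq_esum do rewrite interleave_double.
by under [X in _ + X]eq_esum do rewrite interleave_doubleS.
Qed.

Section outer_volume.
Variables (R : realType) (n : nat).
Implicit Types (A B : set 'rV[R]_n) (lo hi : 'I_n -> R).
Local Open Scope ereal_scope.

Definition box_cover_sums A : set (\bar R) :=
  [set s | exists lo hi : nat -> 'I_n -> R,
     (forall k l, (lo k l <= hi k l)%R) /\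
     A `<=` \bigcup_k box (lo k) (hi k) /\
     s = \sum_(k <oo) (box_vol (lo k) (hi k))%:E].

Lemma volE A : vol A = ereal_inf (box_cover_sums A).
Proof. by []. Qed.

Lemma box_cover_sums_ge0 A s : box_cover_sums A s -> 0 <= s.
Proof.
move=> [lo [hi [le_lohi [_ ->]]]]; apply: nneseries_ge0 => k _ _.
by rewrite lee_fin box_vol_ge0.
Qed.

Lemma vol_ge0 A : 0 <= vol A.
Proof. by apply/ereal_infP => s; exact: box_cover_sums_ge0. Qed.

Lemma le_vol A B : A `<=` B -> vol A <= vol B.
Proof.
move=> AB; apply/ereal_infP => _ [lo [hi [le_lohi [cover ->]]]].
apply: ereal_inf_lbound; exists lo, hi.
by split; [|split; first exact: subset_trans cover].
Qed.

Lemma box_vol_le_vol lo hi : (forall l, lo l <= hi l)%R ->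
  (box_vol lo hi)%:E <= vol (box lo hi).
Proof.
move=> le_lohi; apply/ereal_infP => _ [L [H [le_LH [cover ->]]]].
exact: box_vol_le_cover.
Qed.

Lemma le_ereal_infDl (S : set (\bar R)) x y : 0 <= y ->
  (forall s, S s -> 0 <= s) -> (forall s, S s -> x <= y + s) ->
  x <= y + ereal_inf S.
Proof.
case: y => [r| |] // _ S0 le_x.
  rewrite addeC -leeBlDr //; apply/ereal_infP => s Ss.
  by rewrite leeBlDr // addeC; exact: le_x.
have infS0 : 0 <= ereal_inf S by apply/ereal_infP.
by rewrite addye ?leey // gt_eqF // (lt_le_trans _ infS0) ?ltNy0.
Qed.

Lemma vol_setU_le A B : vol (A `|` B) <= vol A + vol B.
Proof.
rewrite [vol A]volE addeC.
apply: le_ereal_infDl (vol_ge0 B) (@box_cover_sums_ge0 A) _ => s1 s1_cov.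
rewrite [vol B]volE addeC.
apply: le_ereal_infDl (box_cover_sums_ge0 s1_cov) (@box_cover_sums_ge0 B) _.
move=> _ [lo2 [hi2 [le2 [cover2 ->]]]].
case: s1_cov => [lo1 [hi1 [le1 [cover1 ->]]]].
rewrite -nneseries_interleave => [|k|k]; last 2 first.
- by rewrite lee_fin box_vol_ge0.
- by rewrite lee_fin box_vol_ge0.
apply: ereal_inf_lbound.
exists (interleave lo1 lo2), (interleave hi1 hi2); split; last split.
- by move=> k l; rewrite /interleave; case: ifP.
- move=> x [/cover1[k _ x_in]|/cover2[k _ x_in]].
    by exists k.*2 => //; rewrite !interleave_double.
  by exists k.*2.+1 => //; rewrite !interleave_doubleS.
- by apply: eq_eseriesr => k _; rewrite /interleave; case: ifP.
Qed.

End outer_volume.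

Section softmax_confidence.
Variables (R : realType) (n : nat).
Implicit Types (W : 'M[R]_n) (b x : 'rV[R]_n) (z : 'I_n -> R).

Lemma softmax_ge z k tau :
  tau * \sum_(l < n | l != k) expR (z l) <= (1 - tau) * expR (z k) ->
  tau <= softmax z k.
Proof.
move=> le_tail; have ezk := expR_gt0 (z k).
have tail0 : 0 <= \sum_(l < n | l != k) expR (z l).
  by apply: sumr_ge0 => l _; exact: ltW (expR_gt0 _).
rewrite /softmax (bigD1 k) //= ler_pdivlMr ?(ltr_wpDr tail0) //.
by rewrite mulrDr; lra.
Qed.

Lemma softmax_ge_of_gap z k tau : (1 < n)%N -> 0 < tau < 1 ->
  (forall l, l != k -> ln (tau * (n%:R - 1) / (1 - tau)) <= z k - z l) ->
  tau <= softmax z k.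
Proof.
move=> n_gt1 /andP[tau0 tau1] gap; apply: softmax_ge.
have n1_gt0 : 0 < n%:R - 1 :> R by rewrite subr_gt0 ltr1n.
set c := (1 - tau) / (n%:R - 1).
have c_gt0 : 0 < c by rewrite divr_gt0 // subr_gt0.
have tail l : l != k -> tau * expR (z l) <= c * expR (z k).
  move=> /gap; rewrite -ler_expR lnK; last first.
    by rewrite posrE divr_gt0 ?mulr_gt0 // subr_gt0.
  rewrite expRD expRN ler_pdivlMr ?expR_gt0 // mulrAC ler_pdivrMr ?subr_gt0 //.
  by move=> le_tail; rewrite /c mulrAC ler_pdivlMr //; lra.
rewrite mulr_sumr; apply: le_trans (ler_sum _ tail) _.
rewrite (eq_bigl (fun l => l \in predC1 k)) // sumr_const cardC1 card_ord.
rewrite -mulr_natr mulrAC /c -subn1 natrB ?(ltnW n_gt1) // mulfVK //.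
by rewrite gt_eqF.
Qed.

Lemma logitsB W b x i j :
  \sum_(l < n) (W i l - W j l) * x ord0 l + (b ord0 i - b ord0 j) =
  logits W b x i - logits W b x j.
Proof.
by rewrite /logits; under eq_bigr do rewrite mulrBl; rewrite sumrB; lra.
Qed.

Lemma rho_le_rowdist W i j : i != j -> rho W <= rowdist W i j.
Proof.
move=> neq_ij; apply: ge_inf; last by exists i, j.
by exists 0 => _ [i' [j' [_ ->]]]; exact: sqrtr_ge0.
Qed.

Lemma logit_gap_of_not_Delta W b a delta i j x :
  i != j -> 0 <= delta -> cube a x -> ~ Delta W b a delta i j x ->
  delta * rho W < `|logits W b x i - logits W b x j|.
Proof.
move=> neq_ij delta0 x_in x_out.
have {x_in x_out} : delta < `|logits W b x i - logits W b x j| / rowdist W j i.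
  by rewrite -logitsB ltNge; apply/negP => x_in'; apply: x_out.
have [->|dist_neq0] := eqVneq (rowdist W j i) 0.
  by rewrite invr0 mulr0 => /(le_lt_trans delta0); rewrite ltxx.
have dist_gt0 : 0 < rowdist W j i by rewrite lt_def dist_neq0 sqrtr_ge0.
rewrite ltr_pdivlMr //; apply: le_lt_trans.
by rewrite ler_wpM2l // rho_le_rowdist // eq_sym.
Qed.

Lemma logit_gap_of_not_GammaDelta W b a delta i j x :
  i != j -> 0 <= delta -> cube a x -> ~ GammaDelta W b a delta x ->
  delta * rho W < `|logits W b x i - logits W b x j|.
Proof.
move=> neq_ij delta0 x_in x_out.
wlog lt_ij : i j neq_ij / (i < j)%N => [gap|].
  case: (ltngtP i j) => [|lt_ji|/val_inj eq_ij]; first exact: gap.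
    by rewrite distrC; apply: gap => //; rewrite eq_sym.
  by rewrite eq_ij eqxx in neq_ij.
apply: logit_gap_of_not_Delta => // x_in_D; apply: x_out.
by exists i => //; exists j.
Qed.

Lemma Phi_ge_of_not_GammaDelta W b a tau x :
  (1 < n)%N -> 0 < tau < 1 -> 0 < rho W -> cube a x ->
  ~ GammaDelta W b a ((rho W)^-1 * ln (tau * (1 - n%:R) / (tau - 1))) x ->
  Phi_ge W b a tau x.
Proof.
move=> n_gt1 tau01 rho_gt0 x_in x_out; split => //.
set z := logits W b x.
pose k := [arg max_(i > Ordinal (ltnW n_gt1)) z i]%O.
have max_k l : z l <= z k by rewrite /k; case: arg_maxP => // i _; apply.
apply: le_trans (le_bigmax _ _ k); apply: softmax_ge_of_gap => // l neq_lk.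
have qE : tau * (1 - n%:R) / (tau - 1) = tau * (n%:R - 1) / (1 - tau).
  by rewrite -[tau - 1]opprB invrN mulrN -mulNr -mulrN opprB.
rewrite qE in x_out.
set lnq := ln _ in x_out *.
have [lnq_ge0|lnq_lt0] := leP 0 lnq; last first.
  by apply: le_trans (ltW lnq_lt0) _; rewrite subr_ge0.
have delta0 : 0 <= (rho W)^-1 * lnq by rewrite mulr_ge0 // invr_ge0 ltW.
have := logit_gap_of_not_GammaDelta neq_lk delta0 x_in x_out.
by rewrite mulrAC mulVf ?gt_eqF // mul1r distrC ger0_norm ?subr_ge0 // => /ltW.
Qed.

End softmax_confidence.

Lemma lee_oneB_invM (R : realType) (c : R) (x y : \bar R) :
  (0 < c)%R -> (0 <= x)%E -> (0 <= y)%E -> (c%:E <= x + y)%E ->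
  (1 - c^-1%:E * y <= c^-1%:E * x)%E.
Proof.
move=> c_gt0 x0; case: y => [r| |] // r0 le_c.
  rewrite leeBlDr // -ge0_muleDr //.
  have -> : 1%E = (c^-1%:E * c%:E)%E by rewrite -EFinM mulVf ?gt_eqF.
  by rewrite lee_wpmul2l // lee_fin invr_ge0 ltW.
by rewrite gt0_muley ?lte_fin ?invr_gt0 // leNye.
Qed.

Theorem theorem5 (R : realType) (n : nat) (a tau : R) (W : 'M[R]_n) (b : 'rV[R]_n) :
  (2 <= n)%N -> 0 < a -> 0 < rho W -> 0 < tau < 1 ->
  let delta := (rho W)^-1 * ln (tau * (1 - n%:R) / (tau - 1)) in
  (1 - ((2 * a) ^+ n)^-1%:E * vol (GammaDelta W b a delta)
     <= ((2 * a) ^+ n)^-1%:E * vol (Phi_ge W b a tau))%E.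
Proof.
move=> n_gt1 a_gt0 rho_gt0 tau01 /=.
set P := Phi_ge W b a tau; set G := GammaDelta W b a _.
have cube_cover : cube a `<=` P `|` G.
  move=> x x_in; have [|x_out] := pselect (G x); [by right | left].
  exact: Phi_ge_of_not_GammaDelta.
have cube_vol : box_vol (fun _ : 'I_n => - a) (fun=> a) = (2 * a) ^+ n.
  by rewrite /box_vol big_const_ord iter_mulr_1 opprK mulr_natl mulr2n.
apply: lee_oneB_invM; rewrite ?exprn_gt0 ?mulr_gt0 ?vol_ge0 //.
rewrite -cube_vol; apply: le_trans (vol_setU_le P G).
apply: le_trans (le_vol cube_cover).
by apply: box_vol_le_vol => _; lra.
Qed.
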